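(* For all $\lambda$-terms $M,N$: $M\simeq_{\beta_v}N$ iff $M^v\simeq_b N^v$.
   Context: Bang calculus. The set $!\Lambda$ of terms is $T,S ::= x \mid \lambda x.T \mid T\,S \mid \mathrm{der}\,T \mid\ !T$; $\lambda$ the only binder, up to $\alpha$-conversion, $T\{S/x\}$ capture-avoiding substitution. Contexts: $C ::= [\cdot] \mid \lambda x.C \mid C\,T \mid T\,C \mid \mathrm{der}\,C \mid\ !C$. Root steps $(\lambda x.T)(!S)\mapsto_v T\{S/x\}$, $\mathrm{der}(!T)\mapsto_d T$; $\to_b$ is the closure of $\mapsto_v\cup\mapsto_d$ under contexts. $\lambda$-calculus: $M ::= V\mid MN$, values $V ::= x\mid\lambda x.M$; $\to_{\beta_v}$ is the closure of $(\lambda x.M)V\mapsto_{\beta_v}M\{V/x\}$ ($V$ a value) under $\lambda$-contexts $C ::= [\cdot]\mid\lambda x.C\mid C\,M\mid M\,C$. CbV translation: $x^v=\,!x$, $(\lambda x.M)^v=\,!(\lambda x.M^v)$, $(MN)^v=(\mathrm{der}\,M^v)\,N^v$. For a relation $\to_r$, $\simeq_r$ denotes its reflexive-symmetric-transitive closure. *)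

(* Terms are represented with de Bruijn indices, which
   realizes "terms up to alpha-conversion" with capture-avoiding substitution. *)
From Stdlib Require Import Arith Relations.

Inductive lterm : Type :=
| LVar : nat -> lterm
| LLam : lterm -> lterm
| LApp : lterm -> lterm -> lterm.

Fixpoint llift (c d : nat) (t : lterm) : lterm :=
  match t with
  | LVar n => if n <? c then LVar n else LVar (n + d)
  | LLam t => LLam (llift (S c) d t)
  | LApp t u => LApp (llift c d t) (llift c d u)
  end.

Fixpoint lsubst (k : nat) (u : lterm) (t : lterm) : lterm :=
  match t with
  | LVar n => if n <? k then LVar n
              else if n =? k then llift 0 k u else LVar (n - 1)
  | LLam t => LLam (lsubst (S k) u t)
  | LApp t1 t2 => LApp (lsubst k u t1) (lsubst k u t2)
  end.

Definition is_value (t : lterm) : Prop :=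
  match t with LVar _ | LLam _ => True | LApp _ _ => False end.

Inductive beta_v : lterm -> lterm -> Prop :=
| bv_root : forall M V, is_value V -> beta_v (LApp (LLam M) V) (lsubst 0 V M)
| bv_lam : forall M M', beta_v M M' -> beta_v (LLam M) (LLam M')
| bv_appl : forall M M' N, beta_v M M' -> beta_v (LApp M N) (LApp M' N)
| bv_appr : forall M N N', beta_v N N' -> beta_v (LApp M N) (LApp M N').

Inductive bterm : Type :=
| BVar : nat -> bterm
| BLam : bterm -> bterm
| BApp : bterm -> bterm -> bterm
| BDer : bterm -> bterm
| BBang : bterm -> bterm.

Fixpoint blift (c d : nat) (t : bterm) : bterm :=
  match t with
  | BVar n => if n <? c then BVar n else BVar (n + d)
  | BLam t => BLam (blift (S c) d t)
  | BApp t u => BApp (blift c d t) (blift c d u)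
  | BDer t => BDer (blift c d t)
  | BBang t => BBang (blift c d t)
  end.

Fixpoint bsubst (k : nat) (u : bterm) (t : bterm) : bterm :=
  match t with
  | BVar n => if n <? k then BVar n
              else if n =? k then blift 0 k u else BVar (n - 1)
  | BLam t => BLam (bsubst (S k) u t)
  | BApp t1 t2 => BApp (bsubst k u t1) (bsubst k u t2)
  | BDer t => BDer (bsubst k u t)
  | BBang t => BBang (bsubst k u t)
  end.

Inductive bstep : bterm -> bterm -> Prop :=
| b_v : forall T S, bstep (BApp (BLam T) (BBang S)) (bsubst 0 S T)
| b_d : forall T, bstep (BDer (BBang T)) T
| b_lam : forall T T', bstep T T' -> bstep (BLam T) (BLam T')
| b_appl : forall T T' S, bstep T T' -> bstep (BApp T S) (BApp T' S)
| b_appr : forall T S S', bstep S S' -> bstep (BApp T S) (BApp T S')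
| b_der : forall T T', bstep T T' -> bstep (BDer T) (BDer T')
| b_bang : forall T T', bstep T T' -> bstep (BBang T) (BBang T').

Fixpoint cbv (t : lterm) : bterm :=
  match t with
  | LVar n => BBang (BVar n)
  | LLam M => BBang (BLam (cbv M))
  | LApp M N => BApp (BDer (cbv M)) (cbv N)
  end.

Definition beta_v_eq : lterm -> lterm -> Prop := clos_refl_sym_trans lterm beta_v.
Definition b_eq : bterm -> bterm -> Prop := clos_refl_sym_trans bterm bstep.

From Stdlib Require Import Arith Relations Lia.

(* The translation simulates every beta_v step by ->_b steps, which gives the
   forward implication.  For the converse, ->_b is Church-Rosser (Takahashi's
   parallel reduction and complete developments), so M^v and N^v have a common
   reduct.  Erasing [der] and [!] maps a ->_b step to at most one beta_v step,
   provided every [!] in the source guards a variable or an abstraction; this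
   invariant holds for translations and is preserved by ->_b, and the erasure
   of M^v is M itself. *)

Section Simulation.
Variables (A B : Type) (R : relation A) (S : relation B) (f : A -> B).

Lemma clos_rt_map :
  (forall x y, R x y -> S (f x) (f y)) ->
  forall x y, clos_refl_trans A R x y -> clos_refl_trans B S (f x) (f y).
Proof.
  intros sim x y Hxy.
  induction Hxy; eauto using rt_step, rt_refl, rt_trans.
Qed.

Lemma clos_rst_map :
  (forall x y, R x y -> clos_refl_sym_trans B S (f x) (f y)) ->
  forall x y, clos_refl_sym_trans A R x y -> clos_refl_sym_trans B S (f x) (f y).
Proof.
  intros sim x y Hxy.
  induction Hxy; eauto using rst_refl, rst_sym, rst_trans.
Qed.

Variable Inv : A -> Prop.
Hypothesis R_preserves_Inv : forall x y, R x y -> Inv x -> Inv y.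

Lemma clos_rt_invariant :
  forall x y, clos_refl_trans A R x y -> Inv x -> Inv y.
Proof. induction 1; eauto. Qed.

Lemma clos_rt_simulation :
  (forall x y, R x y -> Inv x -> clos_refl_trans B S (f x) (f y)) ->
  forall x y, clos_refl_trans A R x y -> Inv x -> clos_refl_trans B S (f x) (f y).
Proof.
  intros sim x y Hxy.
  induction Hxy as [x y Hxy | x | x y z Hxy IHxy _ IHyz]; intro Ix.
  - exact (sim x y Hxy Ix).
  - apply rt_refl.
  - apply rt_trans with (f y); eauto using clos_rt_invariant.
Qed.

End Simulation.

Section Takahashi.
Variables (A : Type) (R P : relation A) (dev : A -> A).
Hypothesis R_sub_P : forall x y, R x y -> P x y.
Hypothesis P_sub_Rstar : forall x y, P x y -> clos_refl_trans A R x y.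
Hypothesis P_triangle : forall x y, P x y -> P y (dev x).

Lemma triangle_strip : forall x z, clos_refl_trans_1n A P x z ->
  forall y, P x y -> exists w, clos_refl_trans_1n A P y w /\ P z w.
Proof.
  induction 1 as [x | x x' z Pxx' _ IH]; intros y Pxy.
  - exists y; split; [constructor | exact Pxy].
  - destruct (IH (dev x) (P_triangle _ _ Pxx')) as [w [devx_w Pzw]].
    exists w; split; [econstructor; eauto | exact Pzw].
Qed.

Lemma triangle_confluent : forall x y, clos_refl_trans_1n A P x y ->
  forall z, clos_refl_trans_1n A P x z ->
  exists w, clos_refl_trans_1n A P y w /\ clos_refl_trans_1n A P z w.
Proof.
  induction 1 as [x | x x1 y Pxx1 _ IH]; intros z xz.
  - exists z; split; [exact xz | constructor].
  - destruct (triangle_strip _ _ xz _ Pxx1) as [w1 [x1w1 Pzw1]].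
    destruct (IH _ x1w1) as [w [yw w1w]].
    exists w; split; [exact yw | econstructor; eauto].
Qed.

Lemma Pstar_sub_Rstar : forall x y,
  clos_refl_trans_1n A P x y -> clos_refl_trans A R x y.
Proof. induction 1; eauto using rt_refl, rt_trans. Qed.

Lemma church_rosser_of_triangle : forall x y, clos_refl_sym_trans A R x y ->
  exists w, clos_refl_trans A R x w /\ clos_refl_trans A R y w.
Proof.
  enough (joinP : forall x y, clos_refl_sym_trans A R x y ->
    exists w, clos_refl_trans_1n A P x w /\ clos_refl_trans_1n A P y w).
  { intros x y xy. destruct (joinP x y xy) as [w [xw yw]].
    exists w; split; apply Pstar_sub_Rstar; assumption. }
  induction 1 as [x y Rxy | x | x y _ [w [xw yw]] | x y z _ [w1 [xw1 yw1]] _ [w2 [yw2 zw2]]].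
  - exists y; split; [apply clos_rt1n_step; auto | constructor].
  - exists x; split; constructor.
  - exists w; split; assumption.
  - destruct (triangle_confluent _ _ yw1 _ yw2) as [w [w1w w2w]].
    exists w; split; apply clos_rt_rt1n; eapply rt_trans; apply clos_rt1n_rt; eauto.
Qed.

End Takahashi.

Ltac index_cases := repeat (simpl; match goal with
  | |- context [?a <? ?b] => destruct (Nat.ltb_spec a b)
  | |- context [?a =? ?b] => destruct (Nat.eqb_spec a b)
  end); try lia; try (f_equal; lia).

Lemma blift_blift_comm : forall t c d c' d', c' <= c ->
  blift c' d' (blift c d t) = blift (c + d') d (blift c' d' t).
Proof.
  induction t; intros; simpl; try (f_equal; auto; fail).
  - index_cases.
  - f_equal. apply (IHt (S c) d (S c') d'). lia.
Qed.

Lemma blift_blift_merge : forall t c c' d d', c <= c' -> c' <= c + d ->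
  blift c' d' (blift c d t) = blift c (d + d') t.
Proof.
  induction t; intros; simpl; try (f_equal; auto; fail).
  - index_cases.
  - f_equal. apply IHt; lia.
Qed.

Lemma bsubst_blift_cancel : forall t u c k d, c <= k -> k <= c + d ->
  bsubst k u (blift c (S d) t) = blift c d t.
Proof.
  induction t; intros; simpl; try (f_equal; auto; fail).
  - index_cases.
  - f_equal. apply IHt; lia.
Qed.

Lemma blift_bsubst_below : forall t u c d k, k <= c ->
  blift c d (bsubst k u t) = bsubst k (blift (c - k) d u) (blift (S c) d t).
Proof.
  induction t as [n | | | |]; intros u c d k Hkc; simpl; try (f_equal; auto; fail).
  - index_cases. subst n.
    rewrite (blift_blift_comm u (c - k) d 0 k) by lia. f_equal. lia.
  - f_equal. rewrite IHt by lia. reflexivity.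
Qed.

Lemma blift_bsubst_above : forall t u c d k, c <= k ->
  blift c d (bsubst k u t) = bsubst (k + d) u (blift c d t).
Proof.
  induction t; intros; simpl; try (f_equal; auto; fail).
  - index_cases. subst. apply blift_blift_merge; lia.
  - f_equal. rewrite IHt by lia. reflexivity.
Qed.

Lemma bsubst_bsubst : forall t u v j k, j <= k ->
  bsubst k u (bsubst j v t) = bsubst j (bsubst (k - j) u v) (bsubst (S k) u t).
Proof.
  induction t; intros u v j k Hjk; simpl; try (f_equal; auto; fail).
  - index_cases; subst.
    + rewrite (blift_bsubst_above v u 0 j (k - j)) by lia. f_equal. lia.
    + symmetry. apply (bsubst_blift_cancel u _ 0 j); lia.
  - f_equal. rewrite IHt by lia. reflexivity.
Qed.

Notation bsteps := (clos_refl_trans bterm bstep).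

Lemma bsteps_lam : forall t t', bsteps t t' -> bsteps (BLam t) (BLam t').
Proof. apply clos_rt_map. constructor; assumption. Qed.

Lemma bsteps_der : forall t t', bsteps t t' -> bsteps (BDer t) (BDer t').
Proof. apply clos_rt_map. constructor; assumption. Qed.

Lemma bsteps_bang : forall t t', bsteps t t' -> bsteps (BBang t) (BBang t').
Proof. apply clos_rt_map. constructor; assumption. Qed.

Lemma bsteps_app : forall t t' u u', bsteps t t' -> bsteps u u' ->
  bsteps (BApp t u) (BApp t' u').
Proof.
  intros t t' u u' tt' uu'. apply rt_trans with (BApp t' u).
  - apply (clos_rt_map _ _ bstep bstep (fun x => BApp x u)); auto. constructor; assumption.
  - apply (clos_rt_map _ _ bstep bstep (BApp t')); auto. constructor; assumption.
Qed.

Inductive bpar : bterm -> bterm -> Prop :=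
| bpar_var : forall n, bpar (BVar n) (BVar n)
| bpar_lam : forall t t', bpar t t' -> bpar (BLam t) (BLam t')
| bpar_app : forall t t' u u', bpar t t' -> bpar u u' -> bpar (BApp t u) (BApp t' u')
| bpar_der : forall t t', bpar t t' -> bpar (BDer t) (BDer t')
| bpar_bang : forall t t', bpar t t' -> bpar (BBang t) (BBang t')
| bpar_v : forall t t' u u', bpar t t' -> bpar u u' ->
    bpar (BApp (BLam t) (BBang u)) (bsubst 0 u' t')
| bpar_d : forall t t', bpar t t' -> bpar (BDer (BBang t)) t'.
#[local] Hint Constructors bpar : core.

Lemma bpar_refl : forall t, bpar t t.
Proof. induction t; auto. Qed.
#[local] Hint Resolve bpar_refl : core.

Lemma bstep_bpar : forall t t', bstep t t' -> bpar t t'.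
Proof. induction 1; auto. Qed.

Lemma bpar_bsteps : forall t t', bpar t t' -> bsteps t t'.
Proof.
  induction 1; auto using rt_refl, bsteps_lam, bsteps_app, bsteps_der, bsteps_bang.
  - apply rt_trans with (BApp (BLam t') (BBang u')).
    + auto using bsteps_app, bsteps_lam, bsteps_bang.
    + apply rt_step. constructor.
  - apply rt_trans with (BDer (BBang t')).
    + auto using bsteps_der, bsteps_bang.
    + apply rt_step. constructor.
Qed.

Lemma bpar_blift : forall t t', bpar t t' ->
  forall c d, bpar (blift c d t) (blift c d t').
Proof.
  induction 1; intros; simpl; auto.
  rewrite blift_bsubst_below by lia. rewrite Nat.sub_0_r. auto.
Qed.

Lemma bpar_bsubst : forall t t', bpar t t' ->
  forall u u' k, bpar u u' -> bpar (bsubst k u t) (bsubst k u' t').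
Proof.
  induction 1; intros; simpl; auto.
  - destruct (n <? k); auto. destruct (n =? k); auto using bpar_blift.
  - rewrite bsubst_bsubst by lia. rewrite Nat.sub_0_r. auto.
Qed.

Fixpoint bdev (t : bterm) : bterm :=
  match t with
  | BVar n => BVar n
  | BLam a => BLam (bdev a)
  | BApp (BLam a) (BBang b) => bsubst 0 (bdev b) (bdev a)
  | BApp a b => BApp (bdev a) (bdev b)
  | BDer (BBang a) => bdev a
  | BDer a => BDer (bdev a)
  | BBang a => BBang (bdev a)
  end.

Lemma bpar_bdev : forall t t', bpar t t' -> bpar t' (bdev t).
Proof.
  induction 1 as [| | t t' u u' Htt' IHt Huu' IHu | t t' Htt' IHt | | |]; simpl; auto.
  - destruct t as [| t1 | | |]; auto.
    destruct u as [| | | | u1]; auto.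
    inversion Htt'; inversion Huu'; subst. simpl in IHt, IHu.
    inversion IHt; inversion IHu; subst. auto.
  - destruct t as [| | | | t1]; auto.
    inversion Htt'; subst. simpl in IHt. inversion IHt; subst. auto.
  - apply bpar_bsubst; auto.
Qed.

Lemma b_eq_joinable : forall t u, b_eq t u ->
  exists w, bsteps t w /\ bsteps u w.
Proof. exact (church_rosser_of_triangle _ bstep bpar bdev bstep_bpar bpar_bsteps bpar_bdev). Qed.

(* The application case is junk: [cbv_val] is only meant for values. *)
Definition cbv_val (V : lterm) : bterm :=
  match V with LVar n => BVar n | LLam M => BLam (cbv M) | LApp _ _ => BVar 0 end.

Lemma cbv_value : forall V, is_value V -> cbv V = BBang (cbv_val V).
Proof. intros [| |] HV; simpl in *; tauto. Qed.

Lemma cbv_llift : forall M c d, cbv (llift c d M) = blift c d (cbv M).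
Proof.
  induction M; intros; simpl; try congruence.
  destruct (n <? c); reflexivity.
Qed.

Lemma cbv_lsubst : forall M V k, is_value V ->
  cbv (lsubst k V M) = bsubst k (cbv_val V) (cbv M).
Proof.
  induction M as [n | M IHM | M1 IHM1 M2 IHM2]; intros V k HV; simpl.
  - destruct (n <? k); auto. destruct (n =? k); auto.
    rewrite cbv_llift, (cbv_value V HV). destruct V; simpl; tauto.
  - rewrite IHM; auto.
  - rewrite IHM1, IHM2; auto.
Qed.

Lemma cbv_beta_v : forall M N, beta_v M N -> bsteps (cbv M) (cbv N).
Proof.
  induction 1 as [M V HV | | M M' N _ IH | M N N' _ IH]; simpl;
    auto using bsteps_bang, bsteps_lam.
  - rewrite cbv_lsubst, (cbv_value V HV) by exact HV.
    apply rt_trans with (BApp (BLam (cbv M)) (BBang (cbv_val V))); apply rt_step.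
    + do 2 constructor.
    + constructor.
  - auto using bsteps_app, bsteps_der, rt_refl.
  - auto using bsteps_app, rt_refl.
Qed.

Notation lsteps := (clos_refl_trans lterm beta_v).

Lemma lsteps_lam : forall M M', lsteps M M' -> lsteps (LLam M) (LLam M').
Proof. apply clos_rt_map. constructor; assumption. Qed.

Lemma lsteps_app : forall M M' N N', lsteps M M' -> lsteps N N' ->
  lsteps (LApp M N) (LApp M' N').
Proof.
  intros M M' N N' MM' NN'. apply rt_trans with (LApp M' N).
  - apply (clos_rt_map _ _ beta_v beta_v (fun x => LApp x N)); auto. constructor; assumption.
  - apply (clos_rt_map _ _ beta_v beta_v (LApp M')); auto. constructor; assumption.
Qed.

Fixpoint erase (t : bterm) : lterm :=
  match t with
  | BVar n => LVar n
  | BLam a => LLam (erase a)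
  | BApp a b => LApp (erase a) (erase b)
  | BDer a => erase a
  | BBang a => erase a
  end.

Definition is_var_or_lam (t : bterm) : Prop :=
  match t with BVar _ | BLam _ => True | _ => False end.

Fixpoint bang_guarded (t : bterm) : Prop :=
  match t with
  | BVar _ => True
  | BLam a => bang_guarded a
  | BApp a b => bang_guarded a /\ bang_guarded b
  | BDer a => bang_guarded a
  | BBang a => is_var_or_lam a /\ bang_guarded a
  end.

Lemma is_var_or_lam_blift : forall t c d, is_var_or_lam t -> is_var_or_lam (blift c d t).
Proof. intros [n | | | |] c d; simpl; auto. destruct (n <? c); simpl; auto. Qed.

Lemma bang_guarded_blift : forall t c d, bang_guarded t -> bang_guarded (blift c d t).
Proof.
  induction t as [n | | | |]; intros c d; simpl; intuition auto using is_var_or_lam_blift.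
  destruct (n <? c); simpl; auto.
Qed.

Lemma bang_guarded_bsubst : forall t u k, is_var_or_lam u -> bang_guarded u ->
  bang_guarded t -> bang_guarded (bsubst k u t).
Proof.
  induction t as [n | | | | t IHt]; intros u k; simpl; intuition auto.
  - destruct (n <? k); simpl; auto. destruct (n =? k); simpl; auto using bang_guarded_blift.
  - destruct t as [n | | | |]; simpl in *; auto.
    destruct (n <? k); simpl; auto. destruct (n =? k); simpl; auto using is_var_or_lam_blift.
Qed.

Lemma bang_guarded_bstep : forall t t', bstep t t' -> bang_guarded t -> bang_guarded t'.
Proof.
  induction 1 as [T S | T | | | | | T T' HT IHT]; simpl; intuition auto using bang_guarded_bsubst.
  destruct T; simpl in *; try tauto; inversion HT; exact I.
Qed.

Lemma erase_blift : forall t c d, erase (blift c d t) = llift c d (erase t).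
Proof.
  induction t; intros; simpl; try congruence.
  destruct (n <? c); reflexivity.
Qed.

Lemma erase_bsubst : forall t u k, erase (bsubst k u t) = lsubst k (erase u) (erase t).
Proof.
  induction t; intros; simpl; try congruence.
  destruct (n <? k); auto. destruct (n =? k); auto using erase_blift.
Qed.

Lemma erase_bstep : forall t t', bstep t t' -> bang_guarded t ->
  lsteps (erase t) (erase t').
Proof.
  induction 1 as [T S | T | T T' _ IH | T T' S _ IH | T S S' _ IH | T T' _ IH | T T' _ IH];
    simpl; intro Hg.
  - rewrite erase_bsubst. apply rt_step, bv_root. destruct S; simpl in *; tauto.
  - apply rt_refl.
  - apply lsteps_lam, IH, Hg.
  - apply lsteps_app; [apply IH; tauto | apply rt_refl].
  - apply lsteps_app; [apply rt_refl | apply IH; tauto].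
  - apply IH, Hg.
  - apply IH; tauto.
Qed.

Lemma erase_bsteps : forall t t', bsteps t t' -> bang_guarded t ->
  lsteps (erase t) (erase t').
Proof. exact (clos_rt_simulation _ _ _ _ erase _ bang_guarded_bstep erase_bstep). Qed.

Lemma bang_guarded_cbv : forall M, bang_guarded (cbv M).
Proof. induction M; simpl; auto. Qed.

Lemma erase_cbv : forall M, erase (cbv M) = M.
Proof. induction M; simpl; congruence. Qed.

Theorem mainTheorem10 : forall M N : lterm, beta_v_eq M N <-> b_eq (cbv M) (cbv N).
Proof.
  intros M N; split; intro H.
  - apply (clos_rst_map _ _ beta_v bstep cbv); [| exact H].
    intros M' N' MN'. apply clos_rt_clos_rst, cbv_beta_v, MN'.
  - destruct (b_eq_joinable _ _ H) as [w [Mw Nw]].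
    pose proof (erase_bsteps _ _ Mw (bang_guarded_cbv M)) as Mw'.
    pose proof (erase_bsteps _ _ Nw (bang_guarded_cbv N)) as Nw'.
    rewrite erase_cbv in Mw', Nw'.
    apply rst_trans with (erase w); [| apply rst_sym]; apply clos_rt_clos_rst; assumption.
Qed.
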